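(* Let $\mathcal{A}=(\Sigma,Q,I,F,\delta)$ be an NFA, for each $w\in\Sigma$ let $T^{(w)}$ be its $|Q|\times|Q|$ Boolean transition matrix, and let $\mathcal{A}_{\mathrm{SS}}$ be the subset automaton of $\mathcal{A}$. Then $$|\mathcal{A}_{\mathrm{SS}}|\le 1+\sum_{w\in\Sigma}\left|\mathcal{R}(T^{(w)})\right|,$$ where $\mathcal{R}(T)$ denotes the range of the matrix $T$ over the Boolean semifield.
   Context: An NFA is $\mathcal{A}=(\Sigma,Q,I,F,\delta)$ with finite alphabet $\Sigma$, finite state set $Q=\{q_1,\dots,q_n\}$, initial states $I$, accepting states $F$, transitions $\delta\subseteq Q\times\Sigma\times Q$ ($\varepsilon$-free). The Boolean semifield is $\mathbb{B}=(\{0,1\},\vee,\wedge,0,1)$. The transition matrix $T^{(w)}\in\mathbb{B}^{n\times n}$ has $T^{(w)}_{i,j}=1$ iff $(q_i,w,q_j)\in\delta$. The range $\mathcal{R}(T)$ of a Boolean matrix $T$ is the set $\{Tv: v\in\mathbb{B}^n\}$ with Boolean matrix–vector multiplication. The subset automaton $\mathcal{A}_{\mathrm{SS}}$ is the DFA whose states are exactly the subsets $\mathcal{Q}\subseteq Q$ reachable from $\mathcal{Q}_I=I$ by repeatedly applying, for $w\in\Sigma$, the map $\mathcal{Q}\mapsto\{q':(q,w,q')\in\delta,\ q\in\mathcal{Q}\}$ (including the empty set if reachable); $|\mathcal{A}_{\mathrm{SS}}|$ is its number of states. *)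

From mathcomp Require Import all_boot.
Set Implicit Arguments. Unset Strict Implicit. Unset Printing Implicit Defensive.

(* An epsilon-free NFA over alphabet Sigma with state set Q = {q_1..q_n},
   represented as 'I_n (q_{i+1} <-> i). *)
Record nfa (Sigma : finType) (n : nat) := NFA {
  init  : {set 'I_n};
  final : {set 'I_n};
  delta : 'I_n -> Sigma -> 'I_n -> bool
}.

Definition bmatrix (n : nat) := 'I_n -> 'I_n -> bool.
Definition bvec (n : nat) := {ffun 'I_n -> bool}.

Definition bmv n (T : bmatrix n) (v : bvec n) : bvec n :=
  [ffun i => [exists j, T i j && v j]].

Definition brange n (T : bmatrix n) : {set bvec n} :=
  [set bmv T v | v : bvec n].

Definition tmat Sigma n (A : nfa Sigma n) (w : Sigma) : bmatrix n :=
  fun i j => delta A i w j.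

Definition ss_step Sigma n (A : nfa Sigma n) (S : {set 'I_n}) (w : Sigma)
  : {set 'I_n} := [set q' | [exists q in S, delta A q w q']].

Definition ss_edge Sigma n (A : nfa Sigma n) : rel {set 'I_n} :=
  fun S S' => [exists w, S' == ss_step A S w].

Definition ss_states Sigma n (A : nfa Sigma n) : {set {set 'I_n}} :=
  [set S | connect (ss_edge A) (init A) S].

Definition ss_size Sigma n (A : nfa Sigma n) : nat := #|ss_states A|.

From mathcomp Require Import all_boot.
Set Implicit Arguments. Unset Strict Implicit. Unset Printing Implicit Defensive.

(* Every state of the subset automaton other than I is of the form S T^(w),
   a vector of the row space of T^(w).  The row space of a Boolean matrix T
   is never larger than its column space R(T): on the row space the map
   x |-> T (~ x) is inverted by y |-> (~ y) T, because x_j holds exactly when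
   some row of T contained in x has a 1 in column j. *)

Lemma leq_card_bigcup (T I : finType) (F : I -> {set T}) :
  #|\bigcup_(i : I) F i| <= \sum_(i : I) #|F i|.
Proof.
elim/big_rec2: _ => [|i U m _ IH]; first by rewrite cards0.
by apply: leq_trans (leq_card_setU _ _) _; rewrite leq_add2l.
Qed.

Section RowSpace.

Variables (n : nat) (T : bmatrix n).

Definition bvm (v : bvec n) : bvec n := [ffun j => [exists i, v i && T i j]].

Definition brow_range : {set bvec n} := [set bvm v | v : bvec n].

Definition bneg (x : bvec n) : bvec n := [ffun i => ~~ x i].

Lemma bvm_bneg_bmvK : {in brow_range, cancel (fun x => bmv T (bneg x))
                                              (fun y => bvm (bneg y))}.
Proof.
move=> _ /imsetP [v _ ->]; apply/ffunP => j; rewrite ffunE.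
apply/existsP/idP => [[i /andP [row_i_sub_x Tij]] | xj].
- rewrite ffunE in row_i_sub_x; apply: contraNT row_i_sub_x => xj'.
  by rewrite ffunE; apply/existsP; exists j; rewrite Tij ffunE xj'.
- move: xj; rewrite ffunE => /existsP [i /andP [vi Tij]].
  exists i; rewrite Tij andbT !ffunE; apply/negP => /existsP [k].
  rewrite !ffunE => /andP [Tik /negP]; apply.
  by apply/existsP; exists i; rewrite vi.
Qed.

Lemma leq_card_brow_range : #|brow_range| <= #|brange T|.
Proof.
rewrite -(card_in_imset (can_in_inj bvm_bneg_bmvK)).
by apply/subset_leq_card/subsetP => _ /imsetP [x _ ->]; apply: imset_f.
Qed.

End RowSpace.

Definition bvec_of_set n (S : {set 'I_n}) : bvec n := [ffun i => i \in S].

Lemma bvec_of_set_inj n : injective (@bvec_of_set n).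
Proof. by move=> S1 S2 /ffunP eqS; apply/setP => i; have := eqS i; rewrite !ffunE. Qed.

Lemma bvec_of_ss_step Sigma n (A : nfa Sigma n) (S : {set 'I_n}) (w : Sigma) :
  bvec_of_set (ss_step A S w) = bvm (tmat A w) (bvec_of_set S).
Proof.
apply/ffunP => j; rewrite !ffunE inE.
by apply: eq_existsb => i; rewrite ffunE.
Qed.

Lemma leq_card_ss_step_image Sigma n (A : nfa Sigma n) (w : Sigma) :
  #|[set ss_step A S w | S : {set 'I_n}]| <= #|brange (tmat A w)|.
Proof.
rewrite -(card_imset _ (@bvec_of_set_inj n)) -imset_comp.
apply: leq_trans (leq_card_brow_range (tmat A w)).
apply/subset_leq_card/subsetP => _ /imsetP [S _ ->].
by rewrite /= bvec_of_ss_step imset_f.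
Qed.

Lemma ss_states_sub Sigma n (A : nfa Sigma n) :
  ss_states A \subset init A |: \bigcup_(w : Sigma) [set ss_step A S w | S : {set 'I_n}].
Proof.
apply/subsetP => S; rewrite inE => /connectP [p + ->] {S}.
case/lastP: p => [_ | p S]; first exact: setU11.
rewrite rcons_path last_rcons => /andP [_ /existsP [w /eqP ->]].
by apply/setU1r/bigcupP; exists w => //; apply: imset_f.
Qed.

Theorem lemma2 (Sigma : finType) (n : nat) (A : nfa Sigma n) :
  ss_size A <= 1 + \sum_(w : Sigma) #|brange (tmat A w)|.
Proof.
apply: leq_trans (subset_leq_card (ss_states_sub A)) _.
apply: leq_trans (leq_card_setU _ _) _; rewrite cards1 leq_add2l.
apply: leq_trans (leq_card_bigcup _) _.
by apply: leq_sum => w _; apply: leq_card_ss_step_image.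
Qed.
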